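(* Let $a$ be an algebraic element of a ring $K$. (1) The minimal polynomial $f(x)$ of $a$ is unique; moreover, for every $g\in\mathbb{Z}[x]$ with $g(0)=0$ and $g(a)=0$ there exist a positive integer $k$ and $h\in\mathbb{Z}[x]$ such that $k\,g(x)=f(x)h(x)$ and $k$ divides every coefficient of $f$. (2) If $l\,\tilde f(a)=0$ for some positive integer $l$ and some monic $\tilde f\in\mathbb{Z}[x]$ with $\tilde f(0)=0$, then the minimal polynomial of $a$ has the form $f(x)=d\,f^*(x)$ with $d$ a positive integer and $f^*\in\mathbb{Z}[x]$ monic with $f^*(0)=0$.
   Context: Rings are associative and not necessarily unital. An element $a\in K$ is algebraic if $g(a)=0$ for some nonzero $g\in\mathbb{Z}[x]$ with $g(0)=0$. The minimal polynomial of an algebraic element $a$ is a polynomial $f\in\mathbb{Z}[x]$ with $f(0)=0$ and $f(a)=0$ that has the smallest possible degree among nonzero such polynomials and, among those of that degree, the smallest positive leading coefficient. *)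

From mathcomp Require Import all_boot all_order all_algebra.
Set Implicit Arguments. Unset Strict Implicit. Unset Printing Implicit Defensive.
Import GRing.Theory Num.Theory.
Local Open Scope ring_scope.

Definition nonunital_ring_axioms (V : zmodType) (mul : V -> V -> V) : Prop :=
  [/\ forall x y z, mul x (mul y z) = mul (mul x y) z,
      forall x y z, mul (x + y) z = mul x z + mul y z &
      forall x y z, mul x (y + z) = mul x y + mul x z].

(* a^n for n >= 1 (a^1 = a, a^(n+1) = a^n * a). *)
Definition npow (V : zmodType) (mul : V -> V -> V) (a : V) (n : nat) : V :=
  iter n.-1 (fun x => mul x a) a.

(* Evaluation g(a) of g in Z[x] with g(0) = 0 : sum_{i >= 1} g_i a^i
   (the constant term is ignored; it is 0 for the polynomials considered). *)
Definition peval (V : zmodType) (mul : V -> V -> V) (g : {poly int}) (a : V) : V :=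
  \sum_(1 <= i < size g) (npow mul a i) *~ g`_i.

Definition algebraic (V : zmodType) (mul : V -> V -> V) (a : V) : Prop :=
  exists g : {poly int}, [/\ g != 0, g`_0 = 0 & peval mul g a = 0].

Definition is_minpoly (V : zmodType) (mul : V -> V -> V) (a : V) (f : {poly int}) : Prop :=
  [/\ f != 0, f`_0 = 0, peval mul f a = 0, 0 < lead_coef f &
      forall g : {poly int}, g != 0 -> g`_0 = 0 -> peval mul g a = 0 ->
        (size f <= size g)%N /\
        (size g = size f -> 0 < lead_coef g -> lead_coef f <= lead_coef g)].

From HB Require Import structures.
From mathcomp Require Import all_boot all_order all_algebra.
From Stdlib Require Import Classical.
Set Implicit Arguments.
Unset Strict Implicit.
Unset Printing Implicit Defensive.

Import Order.TTheory GRing.Theory Num.Theory.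
Local Open Scope ring_scope.

(* Multiplying a polynomial by x amounts to multiplying its value by a on the
   right, so the annihilating polynomials of a form an ideal of Z[x]; no unit
   of K is needed.  Pseudo-dividing an annihilating polynomial g by the
   minimal polynomial f leaves an annihilating remainder of smaller degree,
   which must vanish, so f divides g up to a nonzero integer factor.  By Gauss'
   lemma g is then a multiple of the primitive part f* of f, which gives (1)
   with k the content of f; if g = l f~ with f~ monic, taking primitive parts
   shows that f* divides f~, hence has leading coefficient 1, which is (2). *)

Section Evaluation.
Variables (V : zmodType) (mul : V -> V -> V) (a : V).

Lemma peval_widen (g : {poly int}) n : (size g <= n)%N ->
  peval mul g a = \sum_(1 <= i < n) npow mul a i *~ g`_i.
Proof.
move=> le_g_n; rewrite /peval; have [le_g1 | lt1g] := leqP (size g) 1.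
  rewrite big_geq // big_nat_cond big1 // => i /andP[/andP[lt0i _] _].
  by rewrite nth_default ?mulr0z // (leq_trans le_g1).
rewrite (big_cat_nat (ltnW lt1g) le_g_n) /= [X in _ + X]big_nat_cond.
rewrite [X in _ + X]big1 ?addr0 //.
by move=> i /andP[/andP[le_gi _] _]; rewrite nth_default ?mulr0z.
Qed.

Lemma peval0 : peval mul 0 a = 0.
Proof. by rewrite /peval size_poly0 big_geq. Qed.

Lemma pevalD g h : peval mul (g + h) a = peval mul g a + peval mul h a.
Proof.
pose n := maxn (size g) (size h).
rewrite !(@peval_widen _ n) ?leq_maxl ?leq_maxr ?size_polyD // -big_split.
by apply: eq_bigr => i _; rewrite coefD mulrzDr.
Qed.

Lemma pevalZ c g : peval mul (c *: g) a = peval mul g a *~ c.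
Proof.
rewrite !(@peval_widen _ (size g)) ?size_scale_leq // mulrz_suml.
by apply: eq_bigr => i _; rewrite coefZ mulrC mulrzA.
Qed.

Lemma pevalN g : peval mul (- g) a = - peval mul g a.
Proof. by rewrite -scaleN1r pevalZ mulrN1z. Qed.

Lemma pevalB g h : peval mul (g - h) a = peval mul g a - peval mul h a.
Proof. by rewrite pevalD pevalN. Qed.

Lemma peval_sum I (r : seq I) (F : I -> {poly int}) :
  peval mul (\sum_(i <- r) F i) a = \sum_(i <- r) peval mul (F i) a.
Proof.
elim: r => [|x r IHr]; first by rewrite !big_nil peval0.
by rewrite !big_cons pevalD IHr.
Qed.

Hypothesis mulV : nonunital_ring_axioms mul.

Definition mulr_right (y x : V) : V := mul x y.

Lemma mulr_right_is_nmod_morphism y : nmod_morphism (mulr_right y).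
Proof.
case: mulV => _ mulDl _; split=> [|x z]; last exact: mulDl.
by apply: (@addrI _ (mul 0 y)); rewrite /mulr_right -mulDl !addr0.
Qed.

HB.instance Definition _ y :=
  GRing.isNmodMorphism.Build V V (mulr_right y) (mulr_right_is_nmod_morphism y).

Lemma mul0l y : mul 0 y = 0.
Proof. exact: (raddf0 (mulr_right y)). Qed.

Lemma mulrzAl x y n : mul (x *~ n) y = mul x y *~ n.
Proof. exact: (raddfMz (mulr_right y)). Qed.

Lemma mul_suml I (r : seq I) (F : I -> V) y :
  mul (\sum_(i <- r) F i) y = \sum_(i <- r) mul (F i) y.
Proof. exact: (raddf_sum (mulr_right y)). Qed.

Lemma peval_mulX (p : {poly int}) : p`_0 = 0 ->
  peval mul (p * 'X) a = mul (peval mul p a) a.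
Proof.
move=> p0; have [->|nz_p] := eqVneq p 0; first by rewrite mul0r peval0 mul0l.
rewrite (@peval_widen _ (size p).+1) ?size_mulX // big_nat_recl ?size_poly_gt0 //.
rewrite coefMX /= p0 mulr0z add0r (@peval_widen _ (size p)) // mul_suml.
rewrite [LHS]big_nat_cond [RHS]big_nat_cond.
apply: eq_bigr => i /andP[/andP[lt0i _] _].
by rewrite coefMX /= mulrzAl /npow /= -{1}(prednK lt0i) iterS.
Qed.

Lemma peval_mulXn_root (p : {poly int}) j : p`_0 = 0 -> peval mul p a = 0 ->
  peval mul (p * 'X^j) a = 0.
Proof.
move=> p0 pa; elim: j => [|j IHj]; first by rewrite mulr1.
rewrite exprSr mulrA peval_mulX ?IHj ?mul0l //.
by rewrite coefMXn; case: ifP.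
Qed.

Lemma peval_mull_root (p q : {poly int}) : p`_0 = 0 -> peval mul p a = 0 ->
  peval mul (q * p) a = 0.
Proof.
move=> p0 pa; rewrite -[q]coefK poly_def mulr_suml peval_sum big1 // => i _.
by rewrite -scalerAl mulrC pevalZ peval_mulXn_root ?mul0rz.
Qed.

End Evaluation.

Lemma ex_min_nat (P : nat -> Prop) :
  (exists n, P n) -> exists2 n, P n & forall m, P m -> (n <= m)%N.
Proof.
case=> n; elim/ltn_ind: n => n IHn Pn.
have [[m Pm lt_mn] | no_smaller] := classic (exists2 m, P m & (m < n)%N).
  exact: IHn Pm.
exists n => // m Pm; rewrite leqNgt; apply/negP => lt_mn.
by apply: no_smaller; exists m.
Qed.

Lemma size_subr_lt (R : nzRingType) (p q : {poly R}) :
  p != 0 -> size p = size q -> lead_coef p = lead_coef q ->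
  (size (p - q)%R < size p)%N.
Proof.
move=> nz_p eq_size eq_lead; rewrite [X in (_ < X)%N](polySpred nz_p) ltnS.
apply/leq_sizeP => j; rewrite leq_eqVlt coefB => /orP[/eqP <- | lt_pj].
  by rewrite {2}eq_size -!lead_coefE eq_lead subrr.
have le_pj : (size p <= j)%N by rewrite (polySpred nz_p).
by rewrite !nth_default ?subrr // -eq_size.
Qed.

Lemma zcontents_gt0 (p : {poly int}) : (0 < zcontents p) = (0 < lead_coef p).
Proof. by rewrite -sgz_gt0 sgz_contents sgz_gt0. Qed.

Lemma zprimitive_monic_of_dvdp (p q : {poly int}) :
  q \is monic -> 0 < lead_coef p -> p %| q -> zprimitive p \is monic.
Proof.
move=> q_monic lead_p_gt0 /dvdpP_int[r def_q].
have nz_p : p != 0 by rewrite -lead_coef_eq0 gt_eqF.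
have : lead_coef (zprimitive r) * lead_coef (zprimitive p) = 1.
  rewrite mulrC -lead_coefM -[zprimitive p]zprimitive_id -zprimitiveM -def_q.
  by rewrite zprimitive_monic ?(monicP q_monic).
move/intUnitRing.unitzPl; rewrite qualifE => /orP[/eqP lead1 | /eqP leadN1].
  exact/monicP.
by have := sgz_lead_primitive p; rewrite leadN1 nz_p.
Qed.

Section MinimalPolynomial.
Variables (V : zmodType) (mul : V -> V -> V) (a : V).

Definition annihilating (g : {poly int}) : Prop :=
  [/\ g != 0, g`_0 = 0 & peval mul g a = 0].

Lemma annihilating_lead_gt0 g : annihilating g ->
  exists2 h, annihilating h & size h = size g /\ 0 < lead_coef h.
Proof.
move=> [nz_g g0 ga]; have nz_sg : sgz (lead_coef g) != 0.
  by rewrite sgz_eq0 lead_coef_eq0.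
exists (sgz (lead_coef g) *: g); split.
- by rewrite scale_poly_eq0 negb_or nz_sg.
- by rewrite coefZ g0 mulr0.
- by rewrite pevalZ ga mul0rz.
- exact: size_scale.
- by rewrite lead_coefZ -abszEsg ltz_nat absz_gt0 lead_coef_eq0.
Qed.

Lemma minpoly_exists : algebraic mul a -> exists f, is_minpoly mul a f.
Proof.
move=> [g0 ann_g0].
pose N n := exists2 g, annihilating g & size g = n.
have [n [g ann_g size_g] min_n] : exists2 n, N n & forall m, N m -> (n <= m)%N.
  by apply: ex_min_nat; exists (size g0), g0.
pose P m := exists2 f, annihilating f & size f = n /\ lead_coef f = m%:Z.
have ex_P : exists m, P m.
  have [h ann_h [size_h lead_h_gt0]] := annihilating_lead_gt0 ann_g.
  by exists `|lead_coef h|%N, h; rewrite ?gtz0_abs // size_h.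
have [m [f [nz_f f0 fa] [size_f lead_f]] min_m] := ex_min_nat ex_P.
have lead_f_gt0 : 0 < lead_coef f by rewrite lt_def lead_coef_eq0 nz_f lead_f.
exists f; split=> // h nz_h h0 ha; rewrite size_f; split.
  by apply: min_n; exists h.
move=> size_h lead_h_gt0; rewrite lead_f -(gtz0_abs lead_h_gt0) lez_nat.
by apply: min_m; exists h; rewrite ?gtz0_abs.
Qed.

Lemma minpoly_unique f1 f2 :
  is_minpoly mul a f1 -> is_minpoly mul a f2 -> f1 = f2.
Proof.
move=> [nz_f1 f10 f1a lead1_gt0 min1] [nz_f2 f20 f2a lead2_gt0 min2].
have [le12 lead12] := min1 f2 nz_f2 f20 f2a.
have [le21 lead21] := min2 f1 nz_f1 f10 f1a.
have eq_size : size f1 = size f2 by apply/eqP; rewrite eqn_leq le12 le21.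
have eq_lead : lead_coef f1 = lead_coef f2.
  by apply/le_anti; rewrite lead12 ?lead21 // eq_size.
apply/eqP; rewrite -subr_eq0; apply: contraT => nz_d.
have [] := min1 (f1 - f2) nz_d; first by rewrite coefB f10 f20 subrr.
  by rewrite pevalB f1a f2a subrr.
by rewrite leqNgt size_subr_lt.
Qed.

Hypothesis mulV : nonunital_ring_axioms mul.

Lemma minpoly_dvdp (f g : {poly int}) :
  is_minpoly mul a f -> g`_0 = 0 -> peval mul g a = 0 -> f %| g.
Proof.
move=> [nz_f f0 fa _ min_f] g0 ga; apply/modp_eq0P.
have def_r : g %% f = lead_coef f ^+ scalp g f *: g - g %/ f * f.
  by rewrite Pdiv.Idomain.divp_eq addrAC subrr add0r.
apply/eqP; apply: contraT => nz_r.
have r0 : (g %% f)`_0 = 0 by rewrite def_r coefB coefZ g0 coef0M f0 !mulr0 subrr.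
have ra : peval mul (g %% f) a = 0.
  by rewrite def_r pevalB pevalZ ga mul0rz peval_mull_root ?subrr.
have [le_fr _] := min_f _ nz_r r0 ra.
by have := Pdiv.Idomain.ltn_modpN0 g nz_f; rewrite ltnNge le_fr.
Qed.

Lemma minpoly_dvd_scaled (f g : {poly int}) :
    is_minpoly mul a f -> g`_0 = 0 -> peval mul g a = 0 ->
  exists (k : nat) (h : {poly int}),
    [/\ (0 < k)%N, g *+ k = f * h & forall i, (k%:Z %| f`_i)%Z].
Proof.
move=> f_min g0 ga; have [h def_g] := dvdpP_int (minpoly_dvdp f_min g0 ga).
have cf_gt0 : 0 < zcontents f by rewrite zcontents_gt0; case: f_min.
exists `|zcontents f|%N, h; rewrite gtz0_abs //; split.
- by rewrite -ltz_nat gtz0_abs.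
- by rewrite -scaler_nat natz gtz0_abs // def_g scalerAl -zpolyEprim.
- by apply/polyOverP; rewrite -dvdz_contents dvdzz.
Qed.

Lemma minpoly_monic_scaled (l : nat) (ft f : {poly int}) :
    (0 < l)%N -> ft \is monic -> ft`_0 = 0 -> peval mul ft a *+ l = 0 ->
    is_minpoly mul a f ->
  exists (d : nat) (fs : {poly int}),
    [/\ (0 < d)%N, fs \is monic, fs`_0 = 0 & f = fs *+ d].
Proof.
move=> l_gt0 ft_monic ft0 lfta f_min.
have nz_l : l%:R != 0 :> int by rewrite pnatr_eq0 -lt0n.
have f_dvd : f %| ft.
  rewrite -(dvdpZr _ _ nz_l) scaler_nat minpoly_dvdp ?coefMn ?ft0 ?mul0rn //.
  by rewrite -scaler_nat pevalZ natz -pmulrn.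
have [nz_f f0 _ lead_f_gt0 _] := f_min.
have cf_gt0 : 0 < zcontents f by rewrite zcontents_gt0.
exists `|zcontents f|%N, (zprimitive f); split.
- by rewrite -ltz_nat gtz0_abs.
- exact: zprimitive_monic_of_dvdp ft_monic lead_f_gt0 f_dvd.
- by rewrite coef_map_id0 ?div0z // f0 div0z.
- by rewrite -scaler_nat natz gtz0_abs //; apply: zpolyEprim.
Qed.

End MinimalPolynomial.

Theorem proposition1 (V : zmodType) (mul : V -> V -> V) (a : V) :
  nonunital_ring_axioms mul -> algebraic mul a ->
  (exists f : {poly int}, is_minpoly mul a f) /\
  (forall f1 f2 : {poly int}, is_minpoly mul a f1 -> is_minpoly mul a f2 -> f1 = f2) /\
  (forall f g : {poly int}, is_minpoly mul a f -> g`_0 = 0 -> peval mul g a = 0 ->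
     exists (k : nat) (h : {poly int}),
       [/\ (0 < k)%N, g *+ k = f * h & forall i : nat, (k%:Z %| f`_i)%Z]) /\
  (forall (l : nat) (ft : {poly int}),
     (0 < l)%N -> ft \is monic -> ft`_0 = 0 -> (peval mul ft a) *+ l = 0 ->
     forall f : {poly int}, is_minpoly mul a f ->
       exists (d : nat) (fs : {poly int}),
         [/\ (0 < d)%N, fs \is monic, fs`_0 = 0 & f = fs *+ d]).
Proof.
move=> mulV alg_a; split; first exact: minpoly_exists.
split; first exact: minpoly_unique.
split; first exact: minpoly_dvd_scaled mulV.
move=> l ft l_gt0 ft_monic ft0 lfta f f_min.
exact: (minpoly_monic_scaled mulV l_gt0 ft_monic ft0 lfta f_min).
Qed.
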